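(* Let $L$ be an oriented, ordered virtual link diagram with affine bilabeling $C$. Let $L_i$ be a component with starting bilabel $(a_1,a_2)$ and weight $n$; put $A=a_1+a_2$. Let $c$ be the first classical crossing met by $L_i$ after its starting point. The crossing $c$ involves components $i$ and $j$, where possibly $j=i$. Let $\iota$ be the index change of $L_i$'s passage through $c$. Let $C'$ be the coloring obtained by moving the starting point of $L_i$ forward just past this passage through $c$, keeping the same starting bilabel. Write $p_{(L,C)}=\sum_{d}\operatorname{sgn}(d)\,t_{o(d)}^{W_C(d)}-\mathrm{writhe}(L)$. Then $p_{(L,C')}$ is obtained from $p_{(L,C)}$ by: - replacing $A$ with $A-\iota$ in every exponent; and - multiplying the monomial corresponding to the crossing $c$ by $t_i^{\,n}$ if $L_i$ passed through the overstrand of $c$, or by $t_j^{-n}$ if $L_i$ passed through the understrand of $c$ (here $j=o(c)$ is the component of the overstrand).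
   Context: **Diagrams.** A virtual link diagram is an oriented planar diagram of ordered closed curves $L_1,\dots,L_n$ (components) with classical and virtual crossings. **Crossing conventions.** Draw a classical crossing with both strands oriented upward. - The bottom-left-to-top-right strand has index change $-1$; the bottom-right-to-top-left strand has index change $+1$. - The crossing is positive ($\operatorname{sgn}=+1$) if the overstrand is the bottom-left-to-top-right strand, and negative otherwise. - Self-crossings have both strands on one component; external crossings have strands on different components. - The weight of $L_i$ is the sum of the index changes of $L_i$ over its passages through external classical crossings. **Affine bilabeling.** - Each component $L_k$ gets a starting point with bilabel $(a^{(k)}_1,a^{(k)}_2)$ of formal integer variables, distinct for different components. - The bilabel is carried along the component in its orientation and is unchanged at virtual crossings. - At a classical crossing with index change $\varepsilon$, the first entry changes by $\varepsilon$ at a self-crossing, and the second entry changes by $\varepsilon$ at an external crossing. - The discrepancy (the component weight, in the second entry) on returning is placed at the starting point. **Weights and polynomial.** Let $|(x,y)|=x+y$. With both strands drawn upward: - if $c$ is positive, $W(c)=|\text{bottom-left}|-|\text{top-left}|$; - if $c$ is negative, $W(c)=|\text{bottom-right}|-|\text{top-right}|$. These are integer linear expressions in the sums $a^{(k)}_1+a^{(k)}_2$. The multi-variable affine index polynomial is $p_{(L,C)}=\sum_c\operatorname{sgn}(c)(t_{o(c)}^{W(c)}-1)$ over classical crossings, where $o(c)$ is the component of the overstrand. *)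

(* Combinatorial (Gauss-diagram) model of an oriented,
   ordered virtual link diagram with an affine bilabeling. *)
From HB Require Import structures.
From mathcomp Require Import all_boot all_order all_algebra.
Set Implicit Arguments. Unset Strict Implicit. Unset Printing Implicit Defensive.
Import Order.TTheory GRing.Theory Num.Theory.
Local Open Scope ring_scope.

Section VirtualLinks.
Variables (m N : nat).
(* m = number of (ordered) components L_0..L_{m-1};
   N = number of classical crossings (virtual crossings carry no data).   *)

(* A passage of a component through a classical crossing, drawn with both
   strands oriented upward: (d, true) is the passage along the
   bottom-left-to-top-right strand of crossing d, (d, false) the passage
   along the bottom-right-to-top-left strand. *)
Definition passage := ('I_N * bool)%type.

(* comps k = the passages of component k through classical crossings, in
   the order met when travelling along L_k from its starting point.
   overBL d = the overstrand of d is the bottom-left-to-top-right strand. *)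
Record vdiagram := VDiagram {
  comps : {ffun 'I_m -> seq passage};
  overBL : {ffun 'I_N -> bool} }.

Implicit Types (D : vdiagram) (d : 'I_N) (p : passage) (k : 'I_m).

Definition wf D : bool :=
  uniq (flatten [seq comps D k | k <- enum 'I_m]) &&
  [forall p : passage, [exists k, p \in comps D k]].

Definition sgn D d : int := if overBL D d then 1 else -1.
Definition writhe D : int := \sum_(d : 'I_N) sgn D d.

Definition ichange p : int := if p.2 then -1 else 1.

Definition self_cr D d : bool :=
  [exists k, ((d, true) \in comps D k) && ((d, false) \in comps D k)].

Definition comp_of D p : option 'I_m := [pick k | p \in comps D k].
Definition over_comp D d : option 'I_m := comp_of D (d, overBL D d).

Definition weight D k : int :=
  \sum_(p <- comps D k | ~~ self_cr D p.1) ichange p.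

(* A bilabel on component k has the form (a^(k)_1 + off1, a^(k)_2 + off2);
   it is represented by the triple (k, off1, off2). *)
Definition bilabel := ('I_m * int * int)%type.

(* bilabel of the arc of L_k after its first j passages (starting bilabel
   (a_1,a_2) at j = 0; for j = size, the arc ending at the starting point,
   carrying the discrepancy). *)
Definition label_after D k (j : nat) : bilabel :=
  (k, \sum_(p <- take j (comps D k) | self_cr D p.1) ichange p,
      \sum_(p <- take j (comps D k) | ~~ self_cr D p.1) ichange p).

Definition in_label D k p : bilabel := label_after D k (index p (comps D k)).
Definition out_label D k p : bilabel := label_after D k (index p (comps D k)).+1.

(* Exponents: integer affine expressions e.1 + sum_k e.2 k * A_k in the
   formal sums A_k = a^(k)_1 + a^(k)_2. *)
Definition expo := (int * {ffun 'I_m -> int})%type.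
Definition Avar k : expo := (0, [ffun k' => ((k' == k) : nat)%:Z]).
Definition cexp (z : int) : expo := (z, 0).

Definition labsum (b : bilabel) : expo :=
  Avar b.1.1 + cexp (b.1.2 + b.2).

Definition W D d : expo :=
  match comp_of D (d, true), comp_of D (d, false) with
  | Some kBL, Some kBR =>
      if overBL D d then
        (* positive: |bottom-left| - |top-left| *)
        labsum (in_label D kBL (d, true)) - labsum (out_label D kBR (d, false))
      else
        (* negative: |bottom-right| - |top-right| *)
        labsum (in_label D kBR (d, false)) - labsum (out_label D kBL (d, true))
  | _, _ => 0
  end.

(* Polynomials are formal Z-linear combinations of monomials t_k^e; a
   polynomial is represented by its coefficient function on monomial keys:
   Some (k, e) stands for t_k^e with e <> 0, and None for t_k^0 = 1. *)
Definition monokey := option ('I_m * expo).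
Definition mkey (o : option 'I_m) (e : expo) : monokey :=
  if e == 0 then None else omap (fun k => (k, e)) o.
Definition mono (o : option 'I_m) (e : expo) : monokey -> int :=
  fun x => ((x == mkey o e) : nat)%:Z.
Definition one_poly : monokey -> int := mono None 0.

Definition aip D : monokey -> int :=
  fun x => \sum_(d : 'I_N) sgn D d * (mono (over_comp D d) (W D d) x - one_poly x).

Definition subst_A (i : 'I_m) (iota : int) (e : expo) : expo :=
  (e.1 - iota * e.2 i, e.2).

Definition move_start D (i : 'I_m) : vdiagram :=
  VDiagram [ffun k => if k == i then rot 1 (comps D k) else comps D k]
           (overBL D).

End VirtualLinks.

(* Self-crossings contribute nothing to the total index change around a
   component (their two passages lie on it with opposite index changes), so
   going once around L_i changes the second label entry by its weight n.
   Moving the starting point of L_i past its first passage q no longer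
   counts the index change iota of q, which lowers |b| by iota for every
   label b of L_i; only the two labels at q, now at the very end of the
   component, also pick up the discrepancy n.  Since
   W(d) = |in-label of the overpassage of d| - |out-label of the underpassage|,
   the uniform shift is exactly the substitution A_i -> A_i - iota, and the
   extra n enters W(c) with sign + when q is the overpassage of c and - when
   it is the underpassage. *)

From HB Require Import structures.
From mathcomp Require Import all_boot all_order all_algebra ring.
From Stdlib Require Import FunctionalExtensionality.
Import Order.TTheory GRing.Theory Num.Theory.
Set Implicit Arguments. Unset Strict Implicit.
Local Open Scope ring_scope.

(* With [e = 0] (resp. [e = 1]) this compares the prefix sums up to the arc
   entering (resp. leaving) [x] before and after rotating [q] to the end. *)
Lemma sum_take_rot1 (T : eqType) (V : zmodType) (f : T -> V) (q : T) (s : seq T)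
    (x : T) (e : nat) :
  uniq (q :: s) -> x \in q :: s -> (e <= 1)%N ->
  \sum_(y <- take (index x (rot 1 (q :: s)) + e) (rot 1 (q :: s))) f y =
  \sum_(y <- take (index x (q :: s) + e) (q :: s)) f y - f q
    + (\sum_(y <- q :: s) f y) *+ (x == q).
Proof.
rewrite rot1_cons -cats1 => /andP[qNs _]; rewrite inE.
case: eqVneq => [-> _ | xNq /= xs] e_le1.
  rewrite index_cat (negbTE qNs) /= eqxx big_cons.
  case: e e_le1 => [|[|//]] _; rewrite ?addn0 ?addn1.
    by rewrite take_size_cat // big_nil sub0r addKr.
  rewrite take_oversize ?size_cat ?addn1 // big_cat big_seq1 /= take0 big_seq1.
  by rewrite subrr add0r addrC.
rewrite eq_sym (negbTE xNq) index_cat xs addr0 /= big_cons takel_cat.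
  by rewrite addrAC subrr add0r.
by case: e e_le1 => [|[|]] // _; rewrite ?addn0 ?addn1 ?index_mem // ltnW ?index_mem.
Qed.

Lemma cexpD m (a b : int) : cexp m (a + b) = cexp m a + cexp m b.
Proof. by apply: injective_projections => /=; rewrite ?addr0. Qed.

Lemma cexpN m (a : int) : cexp m (- a) = - cexp m a.
Proof. by apply: injective_projections => /=; rewrite ?oppr0. Qed.

Lemma subst_AB m (i : 'I_m) (t : int) (e1 e2 : expo m) :
  subst_A i t (e1 - e2) = subst_A i t e1 - subst_A i t e2.
Proof. by apply: injective_projections => //=; rewrite !ffunE; ring. Qed.

Lemma subst_A_Avar_cexp m (i k : 'I_m) (t z : int) :
  subst_A i t (Avar k + cexp m z) = Avar k + cexp m (z - t *+ (k == i)).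
Proof.
apply: injective_projections => //=.
by rewrite !ffunE (eq_sym i); case: (k == i) => /=; ring.
Qed.

Section WellFormed.

Variables (m N : nat) (D : vdiagram m N).
Hypothesis wfD : wf D.

Lemma sum_count_mem_comps p : (\sum_(k < m) count_mem p (comps D k) <= 1)%N.
Proof.
case/andP: wfD => uniq_all _; have := count_uniq_mem p uniq_all.
rewrite count_flatten -map_comp sumnE big_map big_enum /= => ->.
exact: leq_b1.
Qed.

Lemma mem_comps_inj p k1 k2 : p \in comps D k1 -> p \in comps D k2 -> k1 = k2.
Proof.
move=> p_k1 p_k2; apply/eqP; apply: contraTT (sum_count_mem_comps p) => k1Nk2.
rewrite -ltnNge (bigD1 k1) // (bigD1 k2) 1?eq_sym //= addnA.
rewrite -!has_pred1 !has_count in p_k1 p_k2.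
exact: leq_trans (leq_add p_k1 p_k2) (leq_addr _ _).
Qed.

Lemma uniq_comps k : uniq (comps D k).
Proof.
apply: count_mem_uniq => p; have := sum_count_mem_comps p.
rewrite (bigD1 k) //= -has_pred1 has_count.
by case: (count_mem p _) => [|[|]] //= _; rewrite -has_pred1 has_count.
Qed.

Lemma mem_comps_exists p : exists k, p \in comps D k.
Proof. by case/andP: wfD => _ /forallP/(_ p)/existsP. Qed.

Lemma comp_of_mem p k : p \in comps D k -> comp_of D p = Some k.
Proof.
move=> p_k; rewrite /comp_of; case: pickP => [k' p_k' | /(_ k)]; last by rewrite p_k.
by rewrite (mem_comps_inj p_k' p_k).
Qed.

Lemma self_cr_mem d k :
  self_cr D d -> ((d, true) \in comps D k) = ((d, false) \in comps D k).
Proof.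
case/existsP=> k0 /andP[t_k0 f_k0].
by apply/idP/idP => [/(mem_comps_inj t_k0) | /(mem_comps_inj f_k0)] <-.
Qed.

Lemma sum_ichange_self k : \sum_(p <- comps D k | self_cr D p.1) ichange p = 0.
Proof.
pose G p := if (p \in comps D k) && self_cr D p.1 then ichange p else 0.
have -> : \sum_(p <- comps D k | self_cr D p.1) ichange p = \sum_d \sum_(b : bool) G (d, b).
  rewrite pair_bigA big_mkcond big_uniq ?uniq_comps //= big_mkcond /=.
  by apply: eq_bigr => -[d b] _; rewrite /G; case: (_ \in _).
apply: big1 => d _; rewrite big_bool /G /=.
case: (boolP (self_cr D d)) => [/(self_cr_mem k) -> | _]; last by rewrite !andbF addr0.
by case: (_ \in _); rewrite /= ?addr0.
Qed.

Lemma sum_ichange_comps k : \sum_(p <- comps D k) ichange p = weight D k.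
Proof. by rewrite (bigID (fun p => self_cr D p.1)) /= sum_ichange_self add0r. Qed.

End WellFormed.

Lemma labsum_label_after m N (D : vdiagram m N) k j :
  labsum (label_after D k j) = Avar k + cexp m (\sum_(p <- take j (comps D k)) ichange p).
Proof. by rewrite /labsum /label_after /= [in RHS](bigID (fun p => self_cr D p.1)). Qed.

Lemma W_over_under m N (D : vdiagram m N) d ko ku :
  comp_of D (d, overBL D d) = Some ko -> comp_of D (d, ~~ overBL D d) = Some ku ->
  W D d = labsum (in_label D ko (d, overBL D d)) - labsum (out_label D ku (d, ~~ overBL D d)).
Proof. by rewrite /W; case: (overBL D d) => -> ->. Qed.

Lemma comps_move_start m N (D : vdiagram m N) i k :
  comps (move_start D i) k = if k == i then rot 1 (comps D k) else comps D k.
Proof. by rewrite ffunE. Qed.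

Lemma comp_of_move_start m N (D : vdiagram m N) i p :
  comp_of (move_start D i) p = comp_of D p.
Proof.
apply: eq_pick => k /=; rewrite comps_move_start.
by case: eqP => // ->; rewrite mem_rot.
Qed.

Lemma over_comp_move_start m N (D : vdiagram m N) i d :
  over_comp (move_start D i) d = over_comp D d.
Proof. exact: comp_of_move_start. Qed.

Section MoveStart.

Variables (m N : nat) (D : vdiagram m N) (i : 'I_m) (q : passage N) (rest : seq (passage N)).
Hypotheses (wfD : wf D) (comps_i : comps D i = q :: rest).

Lemma labsum_move_start k p e : p \in comps D k -> (e <= 1)%N ->
  labsum (label_after (move_start D i) k (index p (comps (move_start D i) k) + e)) =
  subst_A i (ichange q) (labsum (label_after D k (index p (comps D k) + e)))
    + cexp m (weight D i *+ (p == q)).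
Proof.
move=> p_k e_le1; rewrite !labsum_label_after subst_A_Avar_cexp -addrA -cexpD.
rewrite comps_move_start; case: eqVneq p_k => [-> p_i | kNi p_k].
  have uniq_i := uniq_comps wfD i; rewrite comps_i in p_i uniq_i *.
  by rewrite sum_take_rot1 // -comps_i -(sum_ichange_comps wfD i) mulr1n.
have pNq : p != q.
  by apply: contra_neq kNi => pq; apply: (mem_comps_inj wfD p_k); rewrite comps_i pq mem_head.
by rewrite (negbTE pNq) !mulr0n subr0 addr0.
Qed.

Lemma labsum_in_label_move_start k p : p \in comps D k ->
  labsum (in_label (move_start D i) k p) =
  subst_A i (ichange q) (labsum (in_label D k p)) + cexp m (weight D i *+ (p == q)).
Proof. by move=> p_k; have := labsum_move_start p_k (leq0n 1); rewrite !addn0. Qed.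

Lemma labsum_out_label_move_start k p : p \in comps D k ->
  labsum (out_label (move_start D i) k p) =
  subst_A i (ichange q) (labsum (out_label D k p)) + cexp m (weight D i *+ (p == q)).
Proof. by move=> p_k; have := labsum_move_start p_k (leqnn 1); rewrite !addn1. Qed.

Lemma W_move_start d :
  W (move_start D i) d = subst_A i (ichange q) (W D d)
    + cexp m (weight D i *+ ((d, overBL D d) == q) - weight D i *+ ((d, ~~ overBL D d) == q)).
Proof.
have [ko o_ko] := mem_comps_exists wfD (d, overBL D d).
have [ku u_ku] := mem_comps_exists wfD (d, ~~ overBL D d).
have [co cu] := (comp_of_mem wfD o_ko, comp_of_mem wfD u_ku).
rewrite (W_over_under co cu) (W_over_under (D := move_start D i) (ko := ko) (ku := ku)) ?comp_of_move_start //.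
rewrite labsum_in_label_move_start // labsum_out_label_move_start //.
by rewrite subst_AB cexpD cexpN opprD addrACA.
Qed.

End MoveStart.

Theorem proposition7 (m N : nat) (D : vdiagram m N) (i : 'I_m)
    (c : 'I_N) (s0 : bool) (rest : seq (passage N)) :
  wf D ->
  comps D i = (c, s0) :: rest ->
  let n := weight D i in
  let iota := ichange (c, s0) in
  aip (move_start D i) =
  (fun x => \sum_(d : 'I_N) sgn D d *
              mono (over_comp D d)
                (subst_A i iota (W D d) +
                 (if d == c then
                    (if s0 == overBL D c then cexp m n else cexp m (- n))
                  else 0)) x
            - writhe D * one_poly x).
Proof.
move=> wfD comps_i n iota; apply: functional_extensionality => x.
rewrite /aip /writhe mulr_suml -sumrB; apply: eq_bigr => d _.
rewrite mulrBr over_comp_move_start (W_move_start wfD comps_i) {comps_i}/iota.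
rewrite !xpair_eqE; case: eqVneq => [-> | _] /=; last by rewrite !mulr0n subrr.
by case: s0; case: (overBL D c); rewrite /= ?mulr1n ?mulr0n ?subr0 ?sub0r ?cexpN.
Qed.
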